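(* Let $\gamma$ be a first-order Ehresmann connection on $M\times_NC^{\mathrm{sym}}$ satisfying condition $(C_M)$, and let $\gamma^2=((\zeta^v_N)_* )^{-1}\circ\gamma\circ(\zeta_N)_*$ be the corresponding second-order Ehresmann connection on $M$. Then, in every induced coordinate system, $\gamma_{abr}\circ\zeta_N=-y_{ab,r}$ on $J^1M$ for all $a,b,r$.
   Context: $N$ is a connected oriented $n$-manifold; $p_M\colon M\to N$ the bundle of pseudo-Riemannian metrics of a fixed signature $(n^+,n^-)$; $C^{\mathrm{sym}}\to N$ the bundle of symmetric linear connections (fibre over $x$: values $\Gamma_x$ at $x$); $F(N)$ the linear frame bundle. Summation over repeated indices. A chart $(x^i)$ induces coordinates $(x^i,y_{ij})$ on $M$ ($y_{ij}=y_{ji}=g_x(\partial_i,\partial_j)$), $(x^i,y_{ij},y_{ij,k})$ on $J^1M$, and $(x^i,A^i_{jk})$ on $C^{\mathrm{sym}}$ ($A^i_{jk}=A^i_{kj}$, $A^i_{jk}(\Gamma_x)=\Gamma^i_{jk}(x)$, $\nabla_{\partial_j}\partial_k=\Gamma^i_{jk}\partial_i$). An Ehresmann connection on $M\times_NC^{\mathrm{sym}}\to N$ is a vertical-valued 1-form, identity on vertical vectors; locally $\gamma=\sum_{i\le j}(dy_{ij}+\gamma_{ijk}dx^k)\otimes\partial/\partial y_{ij}+\sum_{j\le k}(dA^i_{jk}+\gamma^i_{jkl}dx^l)\otimes\partial/\partial A^i_{jk}$, with $M$-component $\gamma_M=\sum_{i\le j}(dy_{ij}+\gamma_{ijk}dx^k)\otimes\partial/\partial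 y_{ij}$ viewed as $\mathrm{pr}_1^*TM\to\mathrm{pr}_1^*V(p_M)$. Condition $(C_M)$: $\gamma_M((g_x,\Gamma_x),X)=X-q_*(((p_M)_*X)^{h_{\Gamma_x}}_u)$ for all $X\in T_{g_x}M$, $u\in q^{-1}(g_x)$, where $q\colon F(N)\to M$ maps a frame with dual coframe $(w^h)$ to $\sum\varepsilon_hw^h\otimes w^h$ ($\varepsilon_h=1$ for $h\le n^+$, $-1$ otherwise) and $Y^{h_{\Gamma_x}}_u$ is the horizontal lift at $u$ for $\Gamma_x$ (equivalently, locally $\gamma_{klj}=-(y_{al}A^a_{jk}+y_{ak}A^a_{jl})$). $\zeta_N\colon J^1M\to M\times_NC^{\mathrm{sym}}$, $\zeta_N(j^1_xg)=(g_x,\Gamma^g_x)$ with $\Gamma^g$ the Levi-Civita connection; it is a diffeomorphism, $(\zeta_N)_*$ its differential and $(\zeta_N^v)_*$ the restriction to vertical bundles; a second-order Ehresmann connection on $M$ is a $V(p^1_M)$-valued 1-form on $J^1M$ that is the identity on $V(p^1_M)$. *)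

From HB Require Import structures.
From mathcomp Require Import all_boot all_order all_algebra.
Set Implicit Arguments. Unset Strict Implicit. Unset Printing Implicit Defensive.
Import Order.TTheory GRing.Theory Num.Theory.
Local Open Scope ring_scope.

(* Fibre coordinates of M: a metric value y = (y_ij), symmetric & nondegenerate. *)
Definition is_metric_value (R : realFieldType) (n : nat) (y : 'M[R]_n) : Prop :=
  y^T = y /\ y \in unitmx.

(* Fibre coordinates of C^sym: A i j k = A^i_{jk}, symmetric in j k. *)
Definition sym_conn_value (R : realFieldType) (n : nat)
  (A : 'I_n -> 'I_n -> 'I_n -> R) : Prop :=
  forall i j k, A i j k = A i k j.

(* Jet coordinates: yd i j k = y_{ij,k}, symmetric in i j. *)
Definition jet_deriv_value (R : realFieldType) (n : nat)
  (yd : 'I_n -> 'I_n -> 'I_n -> R) : Prop :=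
  forall i j k, yd i j k = yd j i k.

(* Levi-Civita Christoffel symbols of a 1-jet: the connection component of
   zeta_N(x, y_ij, y_ij,k):
   Gamma^i_{jk} = 1/2 y^{il} (y_{lk,j} + y_{lj,k} - y_{jk,l}). *)
Definition levi_civita (R : realFieldType) (n : nat) (y : 'M[R]_n)
  (yd : 'I_n -> 'I_n -> 'I_n -> R) : 'I_n -> 'I_n -> 'I_n -> R :=
  fun i j k => 2^-1 * \sum_(l < n) (invmx y) i l * (yd l k j + yd l j k - yd j k l).

(* Condition (C_M), local form, for the M-component coefficients
   gam x y A k l j = gamma_{klj}(x, y, A) on the chart domain:
   gamma_{klj} = -(y_{al} A^a_{jk} + y_{ak} A^a_{jl}). *)
Definition cond_CM (R : realFieldType) (n : nat) (Met : 'M[R]_n -> Prop)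
  (U : 'rV[R]_n -> Prop)
  (gam : 'rV[R]_n -> 'M[R]_n -> ('I_n -> 'I_n -> 'I_n -> R) ->
         'I_n -> 'I_n -> 'I_n -> R) : Prop :=
  forall x y A, U x -> Met y -> sym_conn_value A ->
    forall k l j,
      gam x y A k l j = - \sum_(a < n) (y a l * A a j k + y a k * A a j l).

(* The Levi-Civita connection is metric: lowering the upper index of its
   Christoffel symbols with y gives the symbols of the first kind
   1/2 (y_{lk,j} + y_{lj,k} - y_{jk,l}), and in the combination
   y_{al} Γ^a_{jk} + y_{ak} Γ^a_{jl} prescribed by (C_M) all terms cancel
   except y_{kl,j}. *)
From HB Require Import structures.
From mathcomp Require Import all_boot all_order all_algebra.
From mathcomp Require Import lra.
Import Order.TTheory GRing.Theory Num.Theory.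
Local Open Scope ring_scope.

Section LeviCivita.

Variables (R : realFieldType) (n : nat).
Implicit Types (y : 'M[R]_n) (yd : 'I_n -> 'I_n -> 'I_n -> R).

Lemma sum_metric_mul_invmx y (l m : 'I_n) :
  is_metric_value y -> \sum_(a < n) y a l * invmx y a m = (l == m)%:R.
Proof.
move=> [yT yU]; have := congr1 (fun M : 'M[R]_n => M l m) (mulmxV yU).
by rewrite !mxE -{1}yT => <-; apply: eq_bigr => a _; rewrite mxE.
Qed.

Lemma levi_civita_lower y yd (l j k : 'I_n) : is_metric_value y ->
  \sum_(a < n) y a l * levi_civita y yd a j k =
  2^-1 * (yd l k j + yd l j k - yd j k l).
Proof.
move=> yM; rewrite /levi_civita.
under eq_bigr => a _ do rewrite mulrCA big_distrr /=.
rewrite -big_distrr exchange_big /=; congr (_ * _).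
under eq_bigr => m _ do under eq_bigr => a _ do rewrite mulrA.
under eq_bigr => m _ do rewrite -big_distrl /= sum_metric_mul_invmx //.
rewrite (bigD1 l) //= eqxx mul1r big1 ?addr0 // => m ml.
by rewrite eq_sym (negbTE ml) mul0r.
Qed.

Lemma levi_civita_sym y yd :
  jet_deriv_value yd -> sym_conn_value (levi_civita y yd).
Proof.
move=> ydS i j k; rewrite /levi_civita; congr (_ * _).
by apply: eq_bigr => l _; rewrite (ydS j k l) [yd l k j + _]addrC.
Qed.

Lemma levi_civita_metric y yd (k l j : 'I_n) :
  is_metric_value y -> jet_deriv_value yd ->
  \sum_(a < n) (y a l * levi_civita y yd a j k + y a k * levi_civita y yd a j l)
  = yd k l j.
Proof.
move=> yM ydS; rewrite big_split /= !levi_civita_lower //.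
have := ydS l k j; have := ydS l j k; have := ydS k j l.
have := ydS j k l; have := ydS j l k; lra.
Qed.

End LeviCivita.

Theorem lemma2 (R : realFieldType) (n : nat)
  (Met : 'M[R]_n -> Prop) (U : 'rV[R]_n -> Prop)
  (hMet : forall y, Met y -> is_metric_value y)
  (gam : 'rV[R]_n -> 'M[R]_n -> ('I_n -> 'I_n -> 'I_n -> R) ->
         'I_n -> 'I_n -> 'I_n -> R)
  (hCM : cond_CM Met U gam) :
  forall (x : 'rV[R]_n) (y : 'M[R]_n) (yd : 'I_n -> 'I_n -> 'I_n -> R),
    U x -> Met y -> jet_deriv_value yd ->
    forall a b r : 'I_n, gam x y (levi_civita y yd) a b r = - yd a b r.
Proof.
move=> x y yd Ux My ydS a b r.
have yM := hMet y My.
by rewrite hCM ?levi_civita_metric //; apply: levi_civita_sym.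
Qed.
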